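(* Let $n \geq 1$ be an integer and $q$ an arbitrary prime power. Then $m(n,q) \geq \frac{q^n-1}{q-1}$; that is, there exist affine subspaces $A_1,\ldots,A_m$ and $B_1,\ldots,B_m$ of the $n$-dimensional affine space $W$ over $\mathbb{F}_q$, with $m = \frac{q^n-1}{q-1}$, such that $A_i \cap B_i = \emptyset$ for each $1 \leq i \leq m$ and $A_i \cap B_j \neq \emptyset$ whenever $1 \leq i < j \leq m$.
   Context: Let $W$ be the $n$-dimensional affine space over the finite field $\mathbb{F}_q$; an affine subspace is a translate $v+U$ of a linear subspace $U$ of $\mathbb{F}_q^n$. A pair of families of affine subspaces $(A_i,B_i)_{1\le i\le m}$ of $W$ is called cross-intersecting if $A_i \cap B_i = \emptyset$ for each $1 \le i \le m$ and $A_i \cap B_j \neq \emptyset$ whenever $1 \le i < j \le m$. $m(n,q)$ denotes the maximal size $m$ of a cross-intersecting pair of families of affine subspaces $(A_i,B_i)_{1 \le i \le m}$ of $W$. *)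

From HB Require Import structures.
From mathcomp Require Import all_boot all_order all_algebra all_field.
Set Implicit Arguments. Unset Strict Implicit. Unset Printing Implicit Defensive.
Import GRing.Theory.
Local Open Scope ring_scope.

(* The n-dimensional affine space over a finite field F is modelled by the
   vector space 'rV[F]_n; an affine subspace is a translate v + U of a
   linear subspace U : {vspace 'rV[F]_n}. *)
Definition affine_subspace (F : finFieldType) (n : nat)
    (A : {set 'rV[F]_n}) : Prop :=
  exists (v : 'rV[F]_n) (U : {vspace 'rV[F]_n}),
    A = [set x : 'rV[F]_n | (x - v) \in U].

Definition cross_intersecting (F : finFieldType) (n m : nat)
    (A B : 'I_m -> {set 'rV[F]_n}) : Prop :=
  [/\ forall i, affine_subspace (A i),
      forall i, affine_subspace (B i),
      forall i, A i :&: B i = set0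
    & forall i j : 'I_m, (i < j)%N -> A i :&: B j != set0].

From mathcomp Require Import all_boot all_order all_algebra all_field.
Set Implicit Arguments. Unset Strict Implicit. Unset Printing Implicit Defensive.
Import GRing.Theory.
Local Open Scope ring_scope.

(* The points of the projective space PG(n-1, q) are represented by the
   normalized vectors r, whose last nonzero coordinate is 1; there are
   (q^n - 1)/(q - 1) of them. For each such r take the parallel hyperplanes
   A_r = {x | <x, r> = 0} and B_r = {x | <x, r> = 1}, which are disjoint.
   Two distinct normalized vectors are not proportional, so the linear map
   x |-> (<x, r>, <x, r'>) is onto F^2 and A_r meets B_r' whenever r <> r', whatever the order. *)

Section NormalizedVectors.

Variables (F : fieldType) (n : nat).
Implicit Types (x v w r : 'rV[F]_n) (s t : 'I_n).

Definition rdot x w : F := (x *m w^T) 0 0.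

Lemma rdot_delta s w : rdot (delta_mx 0 s) w = w 0 s.
Proof.
rewrite /rdot !mxE (bigD1 s) //= big1 ?addr0; first by rewrite !mxE !eqxx mul1r.
by move=> j /negbTE ne; rewrite !mxE ne andbF mul0r.
Qed.

Lemma rdotB x y w : rdot (x - y) w = rdot x w - rdot y w.
Proof. by rewrite /rdot mulmxBl !mxE. Qed.

Lemma rdotZ c x w : rdot (c *: x) w = c * rdot x w.
Proof. by rewrite /rdot -scalemxAl mxE. Qed.

Definition normalized w : bool :=
  [exists t : 'I_n, (w 0 t == 1) && [forall s : 'I_n, (t < s)%N ==> (w 0 s == 0)]].

Lemma normalizedP w :
  reflect (exists2 t, w 0 t = 1 & forall s, (t < s)%N -> w 0 s = 0)
          (normalized w).
Proof.
apply: (iffP existsP) => [[t /andP[/eqP wt1 /forallP wt0]] | [t wt1 wt0]].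
  by exists t => // s lt_ts; apply/eqP/(implyP (wt0 s)).
exists t; rewrite wt1 eqxx; apply/forallP => s.
by apply/implyP => /wt0 ->.
Qed.

Lemma normalized_neq0 w : normalized w -> w != 0.
Proof.
case/normalizedP => t wt1 _; apply/rV0Pn; exists t.
by rewrite wt1 oner_eq0.
Qed.

Lemma normalized_scale_inj c c' r r' :
    c != 0 -> normalized r -> normalized r' ->
  c *: r = c' *: r' -> c = c' /\ r = r'.
Proof.
move=> nz_c /normalizedP[t rt1 rt0] /normalizedP[t' rt'1 rt'0] crE.
have coordE s : c * r 0 s = c' * r' 0 s.
  by have := congr1 (fun M : 'rV[F]_n => M 0 s) crE; rewrite !mxE.
have nz_c' : c' != 0.
  by apply: contraNneq nz_c => c'0; rewrite -[c]mulr1 -rt1 coordE c'0 mul0r.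
have [lt_tt'|lt_t't|tt'] := ltngtP t t'.
- by move: (coordE t'); rewrite rt0 // mulr0 rt'1 mulr1 => /esym/eqP; rewrite (negbTE nz_c').
- by move: (coordE t); rewrite rt'0 // mulr0 rt1 mulr1 => /eqP; rewrite (negbTE nz_c).
move/val_inj: tt' => tt'; subst t'.
have cc' : c = c' by move: (coordE t); rewrite rt1 rt'1 !mulr1.
by subst c'; split=> //; rewrite -(scalerK nz_c r) crE scalerK.
Qed.

Lemma neq0_normalized_scale w :
  w != 0 -> exists c r, [/\ c != 0, normalized r & w = c *: r].
Proof.
case/rV0Pn => i0 wi0.
have [t wt maxt] := @arg_maxnP _ i0 (fun i => w 0 i != 0) val wi0.
exists (w 0 t), ((w 0 t)^-1 *: w); split=> //; last by rewrite scalerA mulfV ?scale1r.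
apply/normalizedP; exists t => [|s lt_ts]; first by rewrite mxE mulVf.
rewrite mxE; have [->|ws] := eqVneq (w 0 s) 0; first by rewrite mulr0.
by have := leq_trans lt_ts (maxt s ws); rewrite ltnn.
Qed.

Lemma rdot_pivot_shift r w s t : r 0 t = 1 ->
  rdot (delta_mx 0 s - r 0 s *: delta_mx 0 t) r = 0 /\
  rdot (delta_mx 0 s - r 0 s *: delta_mx 0 t) w = w 0 s - r 0 s * w 0 t.
Proof. by move=> rt1; rewrite !rdotB !rdotZ !rdot_delta rt1 mulr1 subrr. Qed.

Lemma normalized_separate r r' :
    normalized r -> normalized r' -> r != r' ->
  exists x, rdot x r = 0 /\ rdot x r' = 1.
Proof.
move=> /normalizedP[t rt1 rt0] /normalizedP[t' rt'1 rt'0] neq_rr'.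
suff [s sep] : exists s, r' 0 s - r 0 s * r' 0 t != 0.
  have [xr xr'] := rdot_pivot_shift r' s rt1.
  exists ((r' 0 s - r 0 s * r' 0 t)^-1 *: (delta_mx 0 s - r 0 s *: delta_mx 0 t)).
  by rewrite !rdotZ xr xr' mulr0 mulVf.
have [lt_tt'|lt_t't|tt'] := ltngtP t t'.
- by exists t'; rewrite rt0 // mul0r subr0 rt'1 oner_eq0.
- by exists t'; rewrite [r' 0 t]rt'0 // mulr0 subr0 rt'1 oner_eq0.
move/val_inj: tt' => tt'; subst t'.
have /rV0Pn[s] : r' - r != 0 by rewrite subr_eq0 eq_sym.
by rewrite !mxE => nz_s; exists s; rewrite rt'1 mulr1.
Qed.

End NormalizedVectors.

Section FiniteField.

Variables (F : finFieldType) (n : nat).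
Implicit Types (v w : 'rV[F]_n).

Definition hyperplane w (a : F) := [set x | rdot x w == a].

Lemma hyperplane_affine w v : affine_subspace (hyperplane w (rdot v w)).
Proof.
exists v, (lker (linfun (mulmxr w^T : 'rV[F]_n -> 'rV[F]_1))).
apply/setP => x; rewrite !inE memv_ker lfunE /= -subr_eq0 -rdotB.
apply/eqP/eqP => [xv0 | /matrixP xv0].
  by apply/matrixP => i j; rewrite !ord1 [RHS]mxE.
by rewrite /rdot xv0 mxE.
Qed.

Lemma card_normalized :
  (#|[set w : 'rV[F]_n | normalized w]| * #|F|.-1 = #|F| ^ n - 1)%N.
Proof.
pose S := setX [set c : F | c != 0] [set w : 'rV[F]_n | normalized w].
have cardS : #|S| = (#|F|.-1 * #|[set w : 'rV[F]_n | normalized w]|)%N.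
  by rewrite cardsX -(cardsC1 (0 : F)); congr (_ * _)%N; apply: eq_card => c; rewrite !inE.
have scale_inj : {in S &, injective (fun p : F * 'rV[F]_n => p.1 *: p.2)}.
  move=> [c r] [c' r']; rewrite !inE /= => /andP[nz_c Nr] /andP[_ Nr'] E.
  by have [-> ->] := normalized_scale_inj nz_c Nr Nr' E.
have scale_onto : [set p.1 *: p.2 | p in S] = [set~ 0].
  apply/setP => w; rewrite !inE; apply/imsetP/idP.
    move=> [[c r]]; rewrite !inE /= => /andP[nz_c Nr] ->.
    by rewrite scaler_eq0 negb_or nz_c normalized_neq0.
  by case/neq0_normalized_scale => c [r [nz_c Nr ->]]; exists (c, r); rewrite ?inE ?nz_c.
by rewrite mulnC -cardS -(card_in_imset scale_inj) scale_onto cardsC1 card_mx mul1n subn1.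
Qed.

End FiniteField.

Theorem proposition3p2 (F : finFieldType) (n : nat) (hn : (1 <= n)%N) :
  exists A B : 'I_((#|F| ^ n - 1) %/ (#|F| - 1)) -> {set 'rV[F]_n},
    cross_intersecting A B.
Proof.
have q1_gt0 : (0 < #|F| - 1)%N by rewrite subn_gt0 finNzRing_gt1.
rewrite -(card_normalized F n) subn1 mulnK -?subn1 //.
set P := [set w | normalized w].
have NP (i : 'I_#|P|) : normalized (enum_val i) by have := enum_valP i; rewrite inE.
exists (fun i => hyperplane (enum_val i) 0), (fun i => hyperplane (enum_val i) 1).
split=> [i | i | i | i j lt_ij].
- have -> : 0 = rdot 0 (enum_val i) by rewrite /rdot mul0mx mxE.
  exact: hyperplane_affine.
- by have /normalizedP[t <- _] := NP i; rewrite -rdot_delta; exact: hyperplane_affine.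
- apply/setP => x; rewrite !inE.
  by case: eqP => //= ->; rewrite eq_sym oner_eq0.
- have neq_ij : enum_val i != enum_val j.
    by apply: contraTneq lt_ij => /enum_val_inj ->; rewrite ltnn.
  have [x [xi xj]] := normalized_separate (NP i) (NP j) neq_ij.
  by apply/set0Pn; exists x; rewrite !inE xi xj !eqxx.
Qed.
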